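(* Let $\ell,k$ be integers with $k>2$ and $\ell>6$, and let $t>0$ be real with $T=\lfloor tk\rfloor$. Let $B_{\ell,k}$ be the graph constructed as follows: for each $1\le r\le k$ take disjoint paths $x_{0,r}x_{1,r}\cdots x_{\ell+1,r}$ and $y_{0,r}y_{1,r}y_{2,r}y_{3,r}y_{4,r}y_{5,r}$; identify all $x_{0,r},y_{0,r}$ ($1\le r\le k$) into a single vertex $u$; identify all $x_{\ell+1,r},y_{5,r}$ into a single vertex $v$; identify $y_{2,1},\dots,y_{2,k}$ into a single vertex $y_{2,*}$ and $y_{3,1},\dots,y_{3,k}$ into a single vertex $y_{3,*}$ (so the $k$ edges $y_{2,r}y_{3,r}$ become the single edge $y_{2,*}y_{3,*}$). Let $H_{\ell,k,t}$ be obtained from $B_{\ell,k}$ by adding $T$ pendant vertices $u_1,\dots,u_T$ adjacent to $u$ and $T$ pendant vertices $v_1,\dots,v_T$ adjacent to $v$. Then the orbits on the vertex set of $H_{\ell,k,t}$ of the group of graph automorphisms fixing $u$ are $\{u_r\}_{r}$, $\{u\}$, $\{x_{1,r}\}_r,\dots,\{x_{\ell,r}\}_r$, $\{y_{1,r}\}_r$, $\{y_{2,*}\}$, $\{y_{3,*}\}$, $\{y_{4,r}\}_r$, $\{v\}$, $\{v_r\}_r$.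
   Context: A graph automorphism is a bijection of the vertex set preserving adjacency and non-adjacency. *)

From HB Require Import structures.
From mathcomp Require Import all_boot all_order all_fingroup.

Set Implicit Arguments.
Unset Strict Implicit.
Unset Printing Implicit Defensive.

(* Indices are 0-based:
     Hu, Hv          : u, v
     Hpu i, Hpv i    : u_{i+1}, v_{i+1}       (i : 'I_T)
     Hx i r          : x_{i+1, r+1}           (i : 'I_l, r : 'I_k), 1 <= i+1 <= l
     Hy1 r, Hy4 r    : y_{1,r+1}, y_{4,r+1}
     Hy2, Hy3        : y_{2,*}, y_{3,*}
   (x_{0,r} = y_{0,r} = u and x_{l+1,r} = y_{5,r} = v after identification.) *)
Inductive hvert (l k T : nat) : Type :=
| Hu | Hv | Hy2 | Hy3
| Hpu of 'I_T | Hpv of 'I_T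
| Hx of 'I_l & 'I_k
| Hy1 of 'I_k | Hy4 of 'I_k.

Arguments Hu {l k T}. Arguments Hv {l k T}.
Arguments Hy2 {l k T}. Arguments Hy3 {l k T}.
Arguments Hpu {l k T}. Arguments Hpv {l k T}.
Arguments Hx {l k T}. Arguments Hy1 {l k T}. Arguments Hy4 {l k T}.

Section HVertFin.
Variables l k T : nat.

Definition hvert_code :=
  (((('I_4 + 'I_T) + 'I_T) + ('I_l * 'I_k)) + ('I_k + 'I_k))%type.

Definition hvert_enc (w : hvert l k T) : hvert_code :=
  match w with
  | Hu => inl (inl (inl (inl (@Ordinal 4 0 isT))))
  | Hv => inl (inl (inl (inl (@Ordinal 4 1 isT))))
  | Hy2 => inl (inl (inl (inl (@Ordinal 4 2 isT))))
  | Hy3 => inl (inl (inl (inl (@Ordinal 4 3 isT))))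
  | Hpu i => inl (inl (inl (inr i)))
  | Hpv i => inl (inl (inr i))
  | Hx i r => inl (inr (i, r))
  | Hy1 r => inr (inl r)
  | Hy4 r => inr (inr r)
  end.

Definition hvert_dec (c : hvert_code) : hvert l k T :=
  match c with
  | inl (inl (inl (inl j))) =>
      match val j with 0 => Hu | 1 => Hv | 2 => Hy2 | _ => Hy3 end
  | inl (inl (inl (inr i))) => Hpu i
  | inl (inl (inr i)) => Hpv i
  | inl (inr (i, r)) => Hx i r
  | inr (inl r) => Hy1 r
  | inr (inr r) => Hy4 r
  end.

Lemma hvert_encK : cancel hvert_enc hvert_dec.
Proof. by case. Qed.

End HVertFin.

HB.instance Definition _ l k T :=
  Countable.copy (hvert l k T) (can_type (@hvert_encK l k T)).
HB.instance Definition _ l k T : isFinite (hvert l k T) := CanIsFinite (@hvert_encK l k T).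

Definition hadj0 (l k T : nat) (a b : hvert l k T) : bool :=
  match a, b with
  | Hu, Hpu _ => true
  | Hv, Hpv _ => true
  | Hu, Hx i _ => val i == 0
  | Hx i r, Hx j s => (r == s) && (val j == (val i).+1)
  | Hx i _, Hv => val i == l.-1
  | Hu, Hy1 _ => true
  | Hy1 _, Hy2 => true
  | Hy2, Hy3 => true
  | Hy3, Hy4 _ => true
  | Hy4 _, Hv => true
  | _, _ => false
  end.

Definition hadj (l k T : nat) : rel (hvert l k T) :=
  fun a b => hadj0 a b || hadj0 b a.

Definition is_graph_aut (V : finType) (e : rel V) (s : {perm V}) : bool :=
  [forall a, forall b, e (s a) (s b) == e a b].

Definition aut_orbit_fixing (V : finType) (e : rel V) (u w : V) : {set V} :=
  [set w' | [exists s : {perm V}, [&& is_graph_aut e s, s u == u & s w == w']]].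

Definition claimed_orbit (l k T : nat) (w : hvert l k T) : {set hvert l k T} :=
  match w with
  | Hpu _ => [set Hpu i | i : 'I_T]
  | Hu => [set Hu]
  | Hx i _ => [set Hx i r | r : 'I_k]
  | Hy1 _ => [set Hy1 r | r : 'I_k]
  | Hy2 => [set Hy2]
  | Hy3 => [set Hy3]
  | Hy4 _ => [set Hy4 r | r : 'I_k]
  | Hv => [set Hv]
  | Hpv _ => [set Hpv i | i : 'I_T]
  end.

From HB Require Import structures.
From mathcomp Require Import all_boot all_order all_algebra all_fingroup.
From mathcomp Require Import reals zify.

(* An automorphism fixing u fixes y_{2,*}, the only vertex other than u
   adjacent to two distinct neighbours of u (as l >= 2); hence it fixes
   y_{3,*}, the neighbour of y_{2,*} not adjacent to u, and then v, the only
   vertex other than y_{3,*} adjacent to two distinct neighbours of y_{3,*}.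
   Propagating along the paths from these fixed vertices, each level
   {x_{i,r}}_r, {y_{1,r}}_r, {y_{4,r}}_r, {u_r}_r, {v_r}_r is mapped into
   itself. Conversely, permuting the u_r, the v_r, and the k parallel paths
   gives automorphisms fixing u that are transitive on every level. *)

Set Implicit Arguments.
Unset Strict Implicit.
Unset Printing Implicit Defensive.

Section GraphAutomorphisms.
Variables (V : finType) (e : rel V).

Lemma graph_autE s : is_graph_aut e s -> forall a b, e (s a) (s b) = e a b.
Proof. by move=> /forallP sA a b; apply/eqP/(forallP (sA a)). Qed.

Lemma graph_autV s : is_graph_aut e s -> is_graph_aut e s^-1.
Proof.
move=> sA; apply/forallP=> a; apply/forallP=> b.
by rewrite -(graph_autE sA) !permKV.
Qed.

Lemma graph_aut_adj_fixed s c b :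
  is_graph_aut e s -> s c = c -> e c (s b) = e c b.
Proof. by move=> sA sc; rewrite -{1}sc graph_autE. Qed.

Lemma graph_aut_fix_common_nbr s c d b1 b2 :
  is_graph_aut e s -> s c = c ->
  (forall a1 a2 x, a1 != a2 -> e c a1 -> e c a2 -> e a1 x -> e a2 x ->
     x != c -> x = d) ->
  b1 != b2 -> e c b1 -> e c b2 -> e b1 d -> e b2 d -> d != c -> s d = d.
Proof.
move=> sA sc d_uniq b12 cb1 cb2 b1d b2d dc.
have cs b : e c (s b) = e c b by apply: graph_aut_adj_fixed.
apply: (d_uniq (s b1) (s b2)); rewrite ?cs ?graph_autE //.
- by rewrite (inj_eq perm_inj).
- by rewrite -{1}sc (inj_eq perm_inj).
Qed.

Definition aut_fixing (c : V) (s : {perm V}) := is_graph_aut e s && (s c == c).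

Lemma aut_fixingV c s : aut_fixing c s -> aut_fixing c s^-1.
Proof.
by case/andP=> sA /eqP sc; rewrite /aut_fixing graph_autV //= -{1}sc permK.
Qed.

End GraphAutomorphisms.

Section OrbitsOfH.
Variables l k T : nat.
Hypotheses (k_gt1 : (1 < k)%N) (l_gt1 : (1 < l)%N).
Local Notation V := (hvert l k T).
Local Notation e := (@hadj l k T).
Local Notation aut_fixing_u := (aut_fixing e Hu).

Definition hclass (w : V) : nat :=
  match w with
  | Hu => 0 | Hpu _ => 1 | Hy1 _ => 2 | Hy2 => 3
  | Hy3 => 4 | Hy4 _ => 5 | Hv => 6 | Hpv _ => 7
  | Hx i _ => 8 + val i
  end.

Lemma hadj_u b : e Hu b -> [|| hclass b == 1, hclass b == 2 | hclass b == 8].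
Proof. by case: b => //= i r; rewrite /hadj /= orbF => /eqP ->. Qed.

Lemma hadj_v b : e Hv b -> [|| hclass b == 7, hclass b == 5 | hclass b == 8 + l.-1].
Proof. by case: b => //= i r; rewrite /hadj /= => /eqP ->. Qed.

Lemma hadj_y2 b : e Hy2 b -> (b == Hy3) || (hclass b == 2).
Proof. by case: b. Qed.

Lemma hadj_y3 b : e Hy3 b -> (b == Hy2) || (hclass b == 5).
Proof. by case: b. Qed.

Lemma hadj_pu i b : e (Hpu i) b -> b = Hu.
Proof. by case: b. Qed.

Lemma hadj_x i r b : e (Hx i r) b ->
  [\/ b = Hu, b = Hv | exists2 j, b = Hx j r & (j == i.+1 :> nat) || (j.+1 == i)].
Proof.
case: b => // [_|_|j s]; [exact: Or31 | exact: Or32 |].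
rewrite /hadj /= => /orP[]/andP[/eqP <- /eqP ji]; apply: Or33; exists j;
  by rewrite ?ji ?eqxx ?orbT.
Qed.

Lemma common_nbr_u a1 a2 x : a1 != a2 -> e Hu a1 -> e Hu a2 ->
  e a1 x -> e a2 x -> x != Hu -> x = Hy2.
Proof.
case: a1 => // [i|i r|r]; case: x => //=; case: a2 => //= j s; rewrite /hadj /= !orbF.
- by move=> _ /eqP i0 _ /eqP il; lia.
- move=> o o0 /eqP ijrs /eqP i0 /eqP j0.
  move=> /orP[]/andP[/eqP ro /eqP oi]; last by rewrite oi in i0.
  move=> /orP[]/andP[/eqP so /eqP oj]; last by rewrite oj in j0.
  by case: ijrs; rewrite ro so; congr Hx; apply: val_inj; rewrite /= i0 j0.
Qed.

Lemma common_nbr_y3 a1 a2 x : a1 != a2 -> e Hy3 a1 -> e Hy3 a2 ->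
  e a1 x -> e a2 x -> x != Hy3 -> x = Hv.
Proof. by case: a1 => // [|r]; case: x => //=; case: a2. Qed.

Let r0 : 'I_k := Ordinal (ltnW k_gt1).
Let r1 : 'I_k := Ordinal k_gt1.

Section FixedVertices.
Variable s : {perm V}.
Hypothesis sA : is_graph_aut e s.
Hypothesis su : s Hu = Hu.

Lemma aut_fix_y2 : s Hy2 = Hy2.
Proof.
by apply: (graph_aut_fix_common_nbr sA su common_nbr_u
  (b1 := Hy1 r0) (b2 := Hy1 r1)).
Qed.

Lemma aut_fix_y3 : s Hy3 = Hy3.
Proof.
have : e Hy2 (s Hy3) by rewrite -{1}aut_fix_y2 graph_autE.
case/hadj_y2/orP=> [/eqP //|]; case Es3: (s Hy3) => // [r] _.
by have := graph_aut_adj_fixed Hy3 sA su; rewrite Es3.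
Qed.

Lemma aut_fix_v : s Hv = Hv.
Proof.
by apply: (graph_aut_fix_common_nbr sA aut_fix_y3 common_nbr_y3
  (b1 := Hy4 r0) (b2 := Hy4 r1)).
Qed.
End FixedVertices.

Definition hclass_stable n :=
  forall s, aut_fixing_u s -> forall w, hclass w = n -> hclass (s w) = n.

Lemma hclass_stableV n : hclass_stable n ->
  forall s, aut_fixing_u s -> forall w, hclass (s w) = n -> hclass w = n.
Proof. by move=> stable_n s /aut_fixingV sG w /(stable_n _ sG); rewrite permK. Qed.

Lemma hclass_stable_y1 : hclass_stable 2.
Proof.
move=> s /andP[sA /eqP su] [] // r _.
have : e Hy2 (s (Hy1 r)) by rewrite -{1}(aut_fix_y2 sA su) graph_autE.
by case/hadj_y2/orP=> [|/eqP //]; rewrite -(aut_fix_y3 sA su) (inj_eq perm_inj).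
Qed.

Lemma hclass_stable_y4 : hclass_stable 5.
Proof.
move=> s /andP[sA /eqP su] [] // r _.
have : e Hy3 (s (Hy4 r)) by rewrite -{1}(aut_fix_y3 sA su) graph_autE.
by case/hadj_y3/orP=> [|/eqP //]; rewrite -(aut_fix_y2 sA su) (inj_eq perm_inj).
Qed.

Lemma hclass_stable_x n : hclass_stable (8 + n).
Proof.
elim/ltn_ind: n => n IH s sG w; have /andP[sA /eqP su] := sG.
case: w => // i r /addnI i_n.
have s_inj a b : (s a == s b) = (a == b) by rewrite (inj_eq perm_inj).
case: n IH i_n => [|m] IH im.
- have {im} -> : i = Ordinal (ltnW l_gt1) by apply: val_inj.
  have : e Hu (s (Hx (Ordinal (ltnW l_gt1)) r)) by rewrite graph_aut_adj_fixed.
  case/hadj_u/or3P=> /eqP cls_s //.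
  + (* Unlike a pendant vertex, x_{1,r} has a neighbour (x_{2,r}) other than u. *)
    have : e (s (Hx (Ordinal (ltnW l_gt1)) r)) (s (Hx (Ordinal l_gt1) r)).
      by rewrite graph_autE /hadj /= ?eqxx.
    case: (s (Hx _ r)) cls_s => // p _ /hadj_pu /eqP.
    by rewrite -su s_inj.
  + by have := hclass_stableV hclass_stable_y1 sG cls_s.
- have ml : (m < l)%N by move: (ltn_ord i); rewrite im => /ltnW.
  have := IH m (ltnSn m) s sG (Hx (Ordinal ml) r) erefl.
  case Eprev: (s (Hx (Ordinal ml) r)) => [||||||j r'||] // [/addnI jm].
  have : e (Hx j r') (s (Hx i r)).
    by rewrite -Eprev (graph_autE sA) /hadj /= im !eqxx.
  case/hadj_x=> [/eqP|/eqP|[j' Es /orP[]/eqP j'j]].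
  + by rewrite -su s_inj.
  + by rewrite -(aut_fix_v sA su) s_inj.
  + by rewrite Es /= j'j jm.
  + have j'm : (j' < m.+1)%N by rewrite -jm -j'j.
    have := hclass_stableV (IH j' j'm) sG (w := Hx i r).
    by rewrite Es => /(_ erefl)/addnI; lia.
Qed.

Lemma hclass_stable_pu : hclass_stable 1.
Proof.
move=> s sG [] // i _; have /andP[sA /eqP su] := sG.
have : e Hu (s (Hpu i)) by rewrite graph_aut_adj_fixed.
case/hadj_u/or3P=> /eqP cls_s //.
- by have := hclass_stableV hclass_stable_y1 sG cls_s.
- by have := hclass_stableV (@hclass_stable_x 0) sG cls_s.
Qed.

Lemma hclass_stable_pv : hclass_stable 7.
Proof.
move=> s sG [] // i _; have /andP[sA /eqP su] := sG.
have : e Hv (s (Hpv i)) by rewrite graph_aut_adj_fixed ?aut_fix_v.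
case/hadj_v/or3P=> /eqP cls_s //.
- by have := hclass_stableV hclass_stable_y4 sG cls_s.
- by have := hclass_stableV (@hclass_stable_x l.-1) sG cls_s.
Qed.

Lemma aut_fixing_u_hclass s w : aut_fixing_u s -> hclass (s w) = hclass w.
Proof.
move=> sG; have /andP[sA /eqP su] := sG.
case: w => [||||i|i|i r|r|r].
- by rewrite su.
- by rewrite aut_fix_v.
- by rewrite aut_fix_y2.
- by rewrite aut_fix_y3.
- exact: hclass_stable_pu.
- exact: hclass_stable_pv.
- exact: hclass_stable_x.
- exact: hclass_stable_y1.
- exact: hclass_stable_y4.
Qed.

Definition hrelabel (f g : {perm 'I_T}) (h : {perm 'I_k}) (w : V) : V :=
  match w with
  | Hpu i => Hpu (f i) | Hpv i => Hpv (g i) | Hx i r => Hx i (h r)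
  | Hy1 r => Hy1 (h r) | Hy4 r => Hy4 (h r) | _ => w
  end.

Lemma hrelabel_inj f g h : injective (hrelabel f g h).
Proof.
by case=> [||||i|i|i r|r|r] [||||j|j|j r'|r'|r'] //= [];
  do ?[move=> -> | move/perm_inj->].
Qed.

Definition hrelabel_perm f g h : {perm V} := perm (@hrelabel_inj f g h).

Lemma hrelabel_aut_fixing_u f g h : aut_fixing_u (hrelabel_perm f g h).
Proof.
rewrite /aut_fixing permE eqxx andbT; apply/forallP=> a; apply/forallP=> b.
rewrite !permE /hadj.
by case: a => [||||i|i|i r|r|r]; case: b => [||||j|j|j r'|r'|r'] //=;
  rewrite ?(inj_eq perm_inj).
Qed.

Lemma hrelabel_transitive w w' :
  hclass w' = hclass w -> exists f g h, hrelabel f g h w = w'.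
Proof.
case: w => [||||i|i|i r|r|r]; case: w' => [||||j|j|j r'|r'|r'] //= hc;
  try by exists 1%g, 1%g, 1%g.
- by exists (tperm i j), 1%g, 1%g; rewrite /= tpermL.
- by exists 1%g, (tperm i j), 1%g; rewrite /= tpermL.
- exists 1%g, 1%g, (tperm r r'); rewrite /= tpermL; congr Hx.
  by apply: val_inj; move/addnI: hc.
- by exists 1%g, 1%g, (tperm r r'); rewrite /= tpermL.
- by exists 1%g, 1%g, (tperm r r'); rewrite /= tpermL.
Qed.

Lemma claimed_orbitE w : claimed_orbit w = [set w' | hclass w' == hclass w].
Proof.
apply/setP=> w'; rewrite inE.
case: w => [||||i|i|i r|r|r] /=; rewrite ?inE;
  (apply/idP/eqP; [by (move=> /imsetP[? _ ->] || move=> /eqP ->) |]);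
  case: w' => //=; try (by move=> j _; apply/imsetP; exists j).
move=> j r' /addnI ji; apply/imsetP; exists r' => //; congr Hx; exact: val_inj.
Qed.

Lemma aut_orbit_fixing_u w : aut_orbit_fixing e Hu w = claimed_orbit w.
Proof.
rewrite claimed_orbitE; apply/setP=> w'; rewrite !inE; apply/existsP/eqP.
- case=> s /and3P[sA su /eqP <-].
  by apply: aut_fixing_u_hclass; apply/andP.
- case/hrelabel_transitive=> f [g [h <-]]; exists (hrelabel_perm f g h).
  have /andP[-> ->] := hrelabel_aut_fixing_u f g h.
  by rewrite permE eqxx.
Qed.

End OrbitsOfH.

Local Open Scope ring_scope.

Theorem proposition18 (R : realType) (l k : nat) (t : R) (T : nat) :
  (2 < k)%N -> (6 < l)%N -> 0 < t ->
  (T%:Z = Num.floor (t * k%:R))%R ->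
  forall w : hvert l k T,
    aut_orbit_fixing (@hadj l k T) Hu w = claimed_orbit w.
Proof. by move=> k_gt2 l_gt6 _ _ w; apply: aut_orbit_fixing_u; lia. Qed.
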